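(* Let $k\ge 3$ and let $w$ be a word over $\{a,b\}$. For any occurrence of $u=ba^{k-1}$ in $w$, local position $0$ is forbidden in that occurrence if and only if local position $k-1$ is forbidden in the same occurrence. For any occurrence of $v=b^{k-1}a$ in $w$, local position $0$ is forbidden in that occurrence.
   Context: $\Sigma=\{a,b\}$. For $k\ge 3$, $S_k=\left(\Sigma^k\setminus\{ba^{k-1},b^{k-1}a\}\right)\cup\left(\Sigma^{k-1}\setminus\{a^{k-1},b^{k-1}\}\right)$, $u=ba^{k-1}$, $v=b^{k-1}a$. $\mathit{Pref}(S^* )$ denotes the set of all prefixes of words in $S^*$. For $w=w_1\cdots w_n$, $w[i..j]=w_i\cdots w_j$ (empty if $i>j$). A position $j$, $0\le j\le n-1$, is forbidden in $w$ if $w[j+1..n]\notin\mathit{Pref}(S_k^* )$. An occurrence of $p\in\{u,v\}$ in $w$ is an index $s$ with $w[s+1..s+k]=p$; its local positions are $0,\dots,k-1$, local position $i$ being the position $s+i$ of $w$, and local position $i$ is forbidden in the occurrence if $s+i$ is forbidden in $w$. *)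

From HB Require Import structures.
From mathcomp Require Import all_boot.
Set Implicit Arguments. Unset Strict Implicit. Unset Printing Implicit Defensive.

Inductive letter := la | lb.

Definition letter_eqb (x y : letter) : bool :=
  match x, y with la, la | lb, lb => true | _, _ => false end.
Lemma letter_eqP : Equality.axiom letter_eqb.
Proof. by case; case; constructor. Qed.
HB.instance Definition _ := hasDecEq.Build letter letter_eqP.

Definition word := seq letter.

Definition u_word (k : nat) : word := lb :: nseq k.-1 la.
Definition v_word (k : nat) : word := rcons (nseq k.-1 lb) la.

Definition inS (k : nat) (x : word) : bool :=
  ((size x == k) && (x != u_word k) && (x != v_word k))
  || ((size x == k.-1) && (x != nseq k.-1 la) && (x != nseq k.-1 lb)).

Definition inSstar (k : nat) (x : word) : Prop :=
  exists ws : seq word, all (inS k) ws /\ flatten ws = x.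

Definition inPrefSstar (k : nat) (x : word) : Prop :=
  exists y : word, inSstar k (x ++ y).

(* Position j (0 <= j <= n-1) is forbidden in w (n = |w|) if
   w[j+1..n] = drop j w is not in Pref(S_k^star). *)
Definition forbidden (k : nat) (w : word) (j : nat) : Prop :=
  j < size w /\ ~ inPrefSstar k (drop j w).

(* s is an occurrence of p in w : w[s+1..s+|p|] = p *)
Definition occurrence (p w : word) (s : nat) : Prop :=
  s + size p <= size w /\ take (size p) (drop s w) = p.

From mathcomp Require Import all_boot.
From Stdlib Require Import Setoid.
Set Implicit Arguments. Unset Strict Implicit. Unset Printing Implicit Defensive.

(** Every word of [S_k] has length [k] or [k - 1], so a word of length at
    least [k] that is a prefix of [S_k^*] begins with a factor of [S_k], and
    what follows that factor is again a prefix of [S_k^*].  A word beginning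
    with [v = b^{k-1}a] has no such factor, since its prefixes of lengths [k]
    and [k - 1] are [v] and [b^{k-1}].  A word [b a^{k-2} a t] can only begin
    with the factor [b a^{k-2}], because its prefix of length [k] is [u]; as
    [b a^{k-2}] does lie in [S_k] for [k >= 3], removing it preserves being a
    prefix of [S_k^*] in both directions. *)

Lemma inS_size k c : inS k c -> size c = k \/ size c = k.-1.
Proof. by case/orP=> /andP[/andP[/eqP-> _] _]; [left | right]. Qed.

Lemma inPrefSstar_cat k c t :
  inS k c -> inPrefSstar k t -> inPrefSstar k (c ++ t).
Proof.
move=> Sc [y [ws [Sws def_ty]]]; exists y, (c :: ws).
by rewrite /= Sc Sws def_ty catA.
Qed.

Lemma inPrefSstar_first_factor k x : 0 < k <= size x -> inPrefSstar k x ->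
  exists c, [/\ inS k c, take (size c) x = c & inPrefSstar k (drop (size c) x)].
Proof.
move=> /andP[k_gt0 k_le_x] [y [[|c ws] [/= Sall def_xy]]].
  by case: x def_xy k_le_x => // _; rewrite leqNgt k_gt0.
case/andP: Sall => Sc Sws.
have c_le_x : size c <= size x.
  by apply: leq_trans k_le_x; case: (inS_size Sc) => ->; rewrite ?leq_pred.
have take_x : take (size c) x = c.
  by rewrite -(takel_cat y c_le_x) -def_xy take_size_cat.
exists c; split=> //; exists y, ws; split=> //.
move: def_xy; rewrite -{1}(cat_take_drop (size c) x) take_x -catA.
by move=> /(congr1 (drop (size c))); rewrite !drop_size_cat.
Qed.

Lemma size_v_word k : 0 < k -> size (v_word k) = k.
Proof. by case: k => // k _; rewrite size_rcons size_nseq. Qed.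

Lemma size_u_word k : 0 < k -> size (u_word k) = k.
Proof. by case: k => // k _; rewrite /= size_nseq. Qed.

Lemma not_inPrefSstar_v_word_cat k t : 0 < k -> ~ inPrefSstar k (v_word k ++ t).
Proof.
case: k => // n _ /inPrefSstar_first_factor[].
  by rewrite size_cat size_v_word // leq_addr.
move=> c [Sc take_c _]; have def_v : v_word n.+1 = nseq n lb ++ [:: la].
  by rewrite cats1.
case: (inS_size Sc) => size_c; rewrite /inS -take_c size_c /= in Sc.
- by rewrite take_size_cat ?size_v_word // !eqxx /= andbF gtn_eqF in Sc.
- by rewrite def_v -catA take_size_cat ?size_nseq // !eqxx /= andbF orbF ltn_eqF in Sc.
Qed.

Lemma u_word_rcons n : rcons (lb :: nseq n la) la = u_word n.+2.
Proof. by rewrite -cats1 cat_cons -(nseqD n 1) addn1. Qed.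

Lemma inPrefSstar_ba_cat k t : 2 < k ->
  inPrefSstar k ((lb :: nseq k.-2 la) ++ la :: t) <-> inPrefSstar k (la :: t).
Proof.
case: k => [|[|[|n]]] // _; set h := lb :: nseq n.+1 la.
have size_h : size h = n.+2 by rewrite /= size_nseq.
have Sh : inS n.+3 h by rewrite /inS size_h ltn_eqF //= eqxx.
split; last exact: inPrefSstar_cat.
case/inPrefSstar_first_factor; first by rewrite size_cat size_h /= addnS ltnS leq_addr.
move=> c [Sc take_c]; case: (inS_size Sc) => size_c; rewrite size_c.
- have take_u : take n.+3 (h ++ la :: t) = u_word n.+3.
    by rewrite -cat_rcons u_word_rcons take_size_cat ?size_u_word.
  by move: Sc; rewrite /inS -take_c size_c take_u size_u_word // !eqxx /= gtn_eqF.
- by rewrite drop_size_cat.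
Qed.

Lemma forbiddenE k w j :
  j < size w -> forbidden k w j <-> ~ inPrefSstar k (drop j w).
Proof. by move=> j_lt_w; split=> [[] | ]. Qed.

Lemma drop_occurrence p w s :
  occurrence p w s -> drop s w = p ++ drop (s + size p) w.
Proof.
by case=> _ def_p; rewrite -{1}(cat_take_drop (size p) (drop s w)) def_p drop_drop addnC.
Qed.

Lemma occurrence_ltn p w s i : occurrence p w s -> i < size p -> s + i < size w.
Proof. by case=> p_le_w _ i_lt_p; apply: leq_trans p_le_w; rewrite ltn_add2l. Qed.

Theorem lemma2 (k : nat) (w : word) :
  3 <= k ->
  (forall s, occurrence (u_word k) w s ->
     (forbidden k w s <-> forbidden k w (s + (k - 1)))) /\
  (forall s, occurrence (v_word k) w s -> forbidden k w s).
Proof.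
case: k => [|[|[|n]]] // _; split=> s occ_s.
- set r := drop (s + n.+3) w.
  have def_ws : drop s w = (lb :: nseq n.+1 la) ++ la :: r.
    by rewrite -cat_rcons u_word_rcons (drop_occurrence occ_s) size_u_word.
  have drop_w : drop (s + n.+2) w = la :: r.
    by rewrite addnC -drop_drop def_ws drop_size_cat //= size_nseq.
  have lt_occ_u i : i < n.+3 -> s + i < size w.
    by move=> i_lt; apply: (occurrence_ltn occ_s); rewrite size_u_word.
  rewrite subn1 /= !forbiddenE ?drop_w ?def_ws ?inPrefSstar_ba_cat ?lt_occ_u //.
  by rewrite -[s]addn0 lt_occ_u.
- rewrite forbiddenE; last by rewrite -[s]addn0 (occurrence_ltn occ_s) // size_v_word.
  by rewrite (drop_occurrence occ_s); apply: not_inPrefSstar_v_word_cat.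
Qed.
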